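(* Let $A$ be a unital ring and $n\in\mathbb N$. Then $\operatorname{sr}(A)\le n$ if and only if the skew corner $1_A M_n(A)=1_AM_n(A)(n\cdot 1_A)$ has stable rank $1$ (in the sense of skew corners).
   Context: For idempotents $p,q$ in a unital ring $R$, the skew corner $pRq$ has (right) stable rank $1$, written $\operatorname{sr}(pRq)=1$, if whenever $a\in pRq$, $x\in qRp$, $b\in pRp$ satisfy $ax+b=p$, there exist $y\in pRq$, $z\in qRp$ with $(a+by)z=p$. $M_n(A)$ is identified with the upper left $n\times n$ corner of $M_{n+m}(A)$; in particular $A=M_1(A)$ sits in $M_n(A)$ as the corner at the matrix unit $e_{11}$, so $1_A=e_{11}$, and $n\cdot 1_A=\mathrm{diag}(1,\dots,1)$ is the identity of $M_n(A)$. The (Bass) stable rank $\operatorname{sr}(A)$ is the least positive integer $n$ such that for every $(a_1,\dots,a_n,b)\in A^{n+1}$ with $\sum a_iA+bA=A$ there exist $c_i\in A$ with $\sum_i (a_i+bc_i)A=A$, or $\infty$ if none exists. *)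

From HB Require Import structures.
From mathcomp Require Import all_boot all_algebra.
Set Implicit Arguments. Unset Strict Implicit. Unset Printing Implicit Defensive.
Import GRing.Theory.
Local Open Scope ring_scope.

Definition in_corner (R : pzRingType) (p q a : R) : Prop :=
  exists r : R, a = p * r * q.

Definition skew_corner_sr1 (R : pzRingType) (p q : R) : Prop :=
  forall a x b : R,
    in_corner p q a -> in_corner q p x -> in_corner p p b ->
    a * x + b = p ->
    exists y z : R, [/\ in_corner p q y, in_corner q p z & (a + b * y) * z = p].

Definition bass_cond (A : pzRingType) (n : nat) : Prop :=
  forall (a : 'I_n -> A) (b : A),
    (exists (r : 'I_n -> A) (s : A), \sum_(i < n) a i * r i + b * s = 1) ->
    exists c : 'I_n -> A,
      exists t : 'I_n -> A, \sum_(i < n) (a i + b * c i) * t i = 1.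

(* sr(A) <= n : the least positive m satisfying bass_cond is <= n
   (sr(A) = oo if none exists). *)
Definition stable_rank_le (A : pzRingType) (n : nat) : Prop :=
  exists m : nat, [/\ (0 < m)%N, (m <= n)%N & bass_cond A m].

(* 1_A = e_11 inside M_n(A) (index 0 is the first one). *)
Definition e11 (A : pzRingType) (n : nat) : 'M[A]_n :=
  \matrix_(i < n, j < n) ((i == j) && (val i == 0%N))%:R.

From mathcomp Require Import all_boot all_algebra.
Set Implicit Arguments. Unset Strict Implicit. Unset Printing Implicit Defensive.
Import GRing.Theory.
Local Open Scope ring_scope.

(* The Bass condition at level m is monotone in m, so sr(A) <= n just says that
   it holds at level n.  Inside M_n(A), the skew corner e11 M_n(A) consists of
   the matrices supported on the first row, M_n(A) e11 of those supported on
   the first column, and e11 M_n(A) e11 is a copy of A in the (0,0) entry.  A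
   row times a column is the corner matrix carrying their scalar product, so
   the skew-corner stable rank condition for e11 M_n(A) is the Bass condition
   at level n, transported entrywise. *)

Lemma bass_cond_succ (A : pzRingType) (m : nat) :
  bass_cond A m -> bass_cond A m.+1.
Proof.
move=> Hm a b [r [s]]; rewrite big_ord_recl -addrA addrCA => Hrs.
(* a_0 is absorbed into the new b-entry b' = a_0 r_0 + b s. *)
pose b' := a ord0 * r ord0 + b * s.
have [c [t Hct]] : exists c t : 'I_m -> A,
    \sum_(i < m) (a (lift ord0 i) + b' * c i) * t i = 1.
  by apply: Hm; exists (fun i => r (lift ord0 i)), 1; rewrite mulr1.
exists (fun i => oapp (fun j => s * c j) 0 (unlift ord0 i)).
exists (fun i => oapp t (r ord0 * \sum_(j < m) c j * t j) (unlift ord0 i)).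
rewrite big_ord_recl unlift_none /= mulr0 addr0 -Hct mulr_sumr mulr_sumr.
rewrite addrC -big_split; apply: eq_bigr => i _ /=.
rewrite liftK /b' /= !(mulrDl, mulrDr) !mulrA.
by rewrite -addrA [X in _ + X]addrC.
Qed.

Lemma bass_cond_mono (A : pzRingType) (m k : nat) :
  (m <= k)%N -> bass_cond A m -> bass_cond A k.
Proof.
move=> /subnKC <-; elim: (k - m)%N => [|d IHd Hm]; first by rewrite addn0.
by rewrite addnS; apply/bass_cond_succ/IHd.
Qed.

Section FirstRowColumn.
Variables (A : pzRingType) (n : nat).
Local Notation P := (e11 A n.+1).

Definition top_row_mx (v : 'I_n.+1 -> A) : 'M[A]_n.+1 :=
  \matrix_(i, j) if i == ord0 then v j else 0.

Definition left_col_mx (v : 'I_n.+1 -> A) : 'M[A]_n.+1 :=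
  \matrix_(i, j) if j == ord0 then v i else 0.

Definition corner_mx (x : A) : 'M[A]_n.+1 :=
  \matrix_(i, j) if (i == ord0) && (j == ord0) then x else 0.

Lemma e11_corner_mx : P = corner_mx 1.
Proof.
apply/matrixP => i j; rewrite !mxE -[val i == 0%N]/(i == ord0).
case: (i =P ord0) => [->|_]; last by rewrite andbF.
by rewrite andbT eq_sym; case: (j == ord0).
Qed.

Lemma corner_mx_inj : injective corner_mx.
Proof. by move=> x y /matrixP/(_ ord0 ord0); rewrite !mxE. Qed.

Lemma add_corner_mx (x y : A) : corner_mx x + corner_mx y = corner_mx (x + y).
Proof. by apply/matrixP => i j; rewrite !mxE; case: ifP; rewrite ?addr0. Qed.

Lemma add_top_row_mx (u v : 'I_n.+1 -> A) :
  top_row_mx u + top_row_mx v = top_row_mx (fun j => u j + v j).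
Proof. by apply/matrixP => i j; rewrite !mxE; case: ifP; rewrite ?addr0. Qed.

Lemma mul_corner_top_row_mx (x : A) (v : 'I_n.+1 -> A) :
  corner_mx x * top_row_mx v = top_row_mx (fun j => x * v j).
Proof.
apply/matrixP => i j; rewrite -mulmxE !mxE big_ord_recl !mxE eqxx /= andbT.
rewrite big1 ?addr0 => [|k _]; first by case: ifP; rewrite ?mul0r.
by rewrite !mxE andbF mul0r.
Qed.

Lemma mul_top_row_left_col_mx (u v : 'I_n.+1 -> A) :
  top_row_mx u * left_col_mx v = corner_mx (\sum_k u k * v k).
Proof.
apply/matrixP => i j; rewrite -mulmxE !mxE; under eq_bigr do rewrite !mxE.
case: (i == ord0); case: (j == ord0) => //=.
all: by rewrite big1 // => k _; rewrite ?mul0r ?mulr0.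
Qed.

Lemma mul_e11_mx (M : 'M[A]_n.+1) : P * M = top_row_mx (fun j => M ord0 j).
Proof.
rewrite e11_corner_mx; apply/matrixP => i j; rewrite -mulmxE !mxE big_ord_recl !mxE.
rewrite eqxx andbT big1 ?addr0 => [|k _]; first by case: ifP; rewrite ?mul1r ?mul0r.
by rewrite !mxE andbF mul0r.
Qed.

Lemma mul_mx_e11 (M : 'M[A]_n.+1) : M * P = left_col_mx (fun i => M i ord0).
Proof.
rewrite e11_corner_mx; apply/matrixP => i j; rewrite -mulmxE !mxE big_ord_recl !mxE.
rewrite eqxx /= big1 ?addr0 => [|k _]; first by case: ifP; rewrite ?mulr1 ?mulr0.
by rewrite !mxE mulr0.
Qed.

Lemma in_corner_e11_1 (M : 'M[A]_n.+1) :
  in_corner P 1 M <-> exists v, M = top_row_mx v.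
Proof.
rewrite /in_corner; split=> [[R ->]|[v ->]]; first by rewrite mulr1 mul_e11_mx; eexists.
exists (top_row_mx v); rewrite mulr1 mul_e11_mx.
by apply/matrixP => i j; rewrite !mxE eqxx; case: ifP.
Qed.

Lemma in_corner_1_e11 (M : 'M[A]_n.+1) :
  in_corner 1 P M <-> exists v, M = left_col_mx v.
Proof.
rewrite /in_corner; split=> [[R ->]|[v ->]]; first by rewrite mul1r mul_mx_e11; eexists.
exists (left_col_mx v); rewrite mul1r mul_mx_e11.
by apply/matrixP => i j; rewrite !mxE eqxx; case: ifP.
Qed.

Lemma in_corner_e11_e11 (M : 'M[A]_n.+1) :
  in_corner P P M <-> exists x, M = corner_mx x.
Proof.
rewrite /in_corner; split=> [[R ->]|[x ->]].
  exists (R ord0 ord0); rewrite mul_mx_e11 mul_e11_mx.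
  by apply/matrixP => i j; rewrite !mxE; case: (i == ord0); case: (j == ord0).
exists (corner_mx x); rewrite mul_mx_e11 mul_e11_mx.
by apply/matrixP => i j; rewrite !mxE eqxx; case: (i == ord0); case: (j == ord0).
Qed.

Lemma bass_cond_iff_e11_sr1 :
  bass_cond A n.+1 <-> skew_corner_sr1 P 1.
Proof.
split=> [HB a x b | H a b [r [s Hrs]]].
  move=> /in_corner_e11_1[u ->] /in_corner_1_e11[v ->] /in_corner_e11_e11[y ->].
  rewrite mul_top_row_left_col_mx add_corner_mx {1}e11_corner_mx => /corner_mx_inj Huv.
  have [c [t Hct]] : exists c t, \sum_k (u k + y * c k) * t k = 1.
    by apply: HB; exists v, 1; rewrite mulr1.
  exists (top_row_mx c), (left_col_mx t); split.
  - by apply/in_corner_e11_1; exists c.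
  - by apply/in_corner_1_e11; exists t.
  by rewrite mul_corner_top_row_mx add_top_row_mx mul_top_row_left_col_mx Hct e11_corner_mx.
have [||||Y [Z [/in_corner_e11_1[y ->] /in_corner_1_e11[z ->]]]] :=
  H (top_row_mx a) (left_col_mx r) (corner_mx (b * s)).
- by apply/in_corner_e11_1; exists a.
- by apply/in_corner_1_e11; exists r.
- by apply/in_corner_e11_e11; exists (b * s).
- by rewrite mul_top_row_left_col_mx add_corner_mx Hrs e11_corner_mx.
rewrite mul_corner_top_row_mx add_top_row_mx mul_top_row_left_col_mx e11_corner_mx.
move=> /corner_mx_inj Hyz; exists (fun k => s * y k), z.
by rewrite -Hyz; apply: eq_bigr => k _; rewrite mulrA.
Qed.
End FirstRowColumn.

Theorem lemma1 (A : pzRingType) (n : nat) (hn : (0 < n)%N) :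
  stable_rank_le A n <-> skew_corner_sr1 (e11 A n) (1 : 'M[A]_n).
Proof.
case: n hn => // n _; split=> [[m [_ le_mn Hm]] | H].
  exact/bass_cond_iff_e11_sr1/(bass_cond_mono le_mn Hm).
by exists n.+1; split=> //; apply/bass_cond_iff_e11_sr1.
Qed.
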